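(* A graph $G$ can be explained by a labeled level-1 network if and only if every induced subgraph of $G$ can be explained by a labeled level-1 network.
   Context: Graphs finite, simple, undirected. Network on finite $X$: a DAG $N=(V,E)$ with either $V=X=\{x\}$, or (N1) unique root of indegree 0, outdegree $\ge2$; (N2) $x\in X$ iff outdegree 0, indegree 1; (N3) every other non-root vertex has indegree 1 and outdegree $\ge2$, or indegree 2 (hybrid-vertex) and outdegree $\ge1$. Level-1: every biconnected component of the underlying undirected graph contains at most one hybrid-vertex; then the lowest common ancestor $\mathrm{lca}_N(x,y)$ (the minimal common ancestor w.r.t. the ancestor order) is unique. Labeled network: $t:V\to\{0,1,\odot\}$, $t(v)=\odot$ iff $v\in X$; it explains $G$ if $G$ is isomorphic to the graph on $X$ with $x\ne y$ adjacent iff $t(\mathrm{lca}_N(x,y))=1$. *)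

From mathcomp Require Import all_boot.
Set Implicit Arguments. Unset Strict Implicit. Unset Printing Implicit Defensive.

Inductive label := L0 | L1 | Lodot.

Section Networks.
Variable V : finType.
Variable E : rel V.

Definition indeg (v : V) : nat := #|[set u | E u v]|.
Definition outdeg (v : V) : nat := #|[set w | E v w]|.

Definition acyclic : Prop := forall u v, E u v -> ~~ connect E v u.

Definition is_root (r : V) : Prop := indeg r = 0.

Definition network_conditions (X : {set V}) : Prop :=
  (exists r, [/\ indeg r = 0, 2 <= outdeg r & forall v, indeg v = 0 -> v = r]) /\
  (forall x, x \in X <-> (outdeg x = 0 /\ indeg x = 1)) /\
  (forall v, indeg v != 0 -> v \notin X ->
     (indeg v = 1 /\ 2 <= outdeg v) \/ (indeg v = 2 /\ 1 <= outdeg v)).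

Definition is_network (X : {set V}) : Prop :=
  acyclic /\
  ((#|V| = 1 /\ X = [set: V]) \/ network_conditions X).

Definition hybrid (v : V) : bool := indeg v == 2.

Definition und : rel V := fun u v => E u v || E v u.

Definition connected_in (S : {set V}) : Prop :=
  forall x y, x \in S -> y \in S ->
    connect (fun a b => [&& a \in S, b \in S & und a b]) x y.

Definition biconnected (B : {set V}) : Prop :=
  connected_in B /\ forall v, v \in B -> connected_in (B :\ v).

Definition is_block (B : {set V}) : Prop :=
  biconnected B /\ forall B' : {set V}, B \subset B' -> biconnected B' -> B' = B.

Definition level1 : Prop :=
  forall B, is_block B -> #|[set h in B | hybrid h]| <= 1.

Definition ancestor (u v : V) : bool := connect E u v.

Definition common_ancestor (x y w : V) : bool := ancestor w x && ancestor w y.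

Definition is_lca (x y w : V) : Prop :=
  common_ancestor x y w /\
  forall w', common_ancestor x y w' -> ancestor w w' -> w' = w.

End Networks.

Definition explainable_level1 (T : finType) (e : rel T) : Prop :=
  exists (V : finType) (E : rel V) (X : {set V}) (t : V -> label) (phi : T -> V),
    [/\ is_network E X, level1 E,
        (forall v, t v = Lodot <-> v \in X),
        (injective phi /\ forall x, x \in X <-> exists a, phi a = x) &
        (forall a b, e a b <->
           (a != b /\ exists w, is_lca E (phi a) (phi b) w /\ t w = L1))].

Definition induced (T : finType) (e : rel T) (S : {set T}) : rel {x : T | x \in S} :=
  fun a b => e (val a) (val b).
Arguments induced {T} e S _ _.

(* The backward direction takes [S] to be the whole vertex set: the subgraph
   induced on it is isomorphic to the graph (lemma [explainable_iso]).

   For the forward direction we work with pre-networks: rooted DAGs with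
   indegree at most 2 in which no biconnected vertex set contains two hybrids,
   together with an injective leaf map and a labelling explaining the graph.
   A network explaining [G] is a pre-network for [G]; restricting its leaf map
   to [S] gives a pre-network for [G[S]]. We then repeatedly suppress a
   non-leaf vertex that is a sink, or has a single child and at most one
   parent, replacing its parent-child path by an arc; this keeps a
   pre-network. The delicate point is level-1: a biconnected set using a new
   arc lifts back to one through the suppressed vertex, or else would give
   two hybrids on either side of it, which the interval between the two
   parents of a hybrid and their minimal common ancestor forbids (that
   interval is biconnected). When no vertex can be suppressed, the pre-network
   is a network, and relabelling gives an explanation of [G[S]]. *)

From mathcomp Require Import all_boot.
From Stdlib Require Import Classical.
Set Implicit Arguments. Unset Strict Implicit. Unset Printing Implicit Defensive.

Section Digraphs.
Variables (V : finType) (E : rel V).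

Definition adj_in (A : {set V}) : rel V := fun a b => [&& a \in A, b \in A & und E a b].

Lemma adj_in_sym A : symmetric (adj_in A).
Proof. by move=> a b; rewrite /adj_in /und andbCA orbC. Qed.

Lemma connect_adj_in_sym A x y : connect (adj_in A) x y = connect (adj_in A) y x.
Proof. exact: (sym_connect_sym (adj_in_sym A)). Qed.

Lemma connected_in_hub (A : {set V}) h :
  (forall y, y \in A -> connect (adj_in A) y h) -> connected_in E A.
Proof.
move=> hub x y xA yA; apply: connect_trans (hub x xA) _.
by rewrite connect_adj_in_sym; apply: hub.
Qed.

Lemma path_adj_in (A : {set V}) x p :
  path E x p -> all [in A] (x :: p) -> connect (adj_in A) x (last x p).
Proof.
elim: p x => [|y p IHp] x /=; first by rewrite connect0.
move=> /andP [xy yp] /and3P [xA yA pA].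
apply: connect_trans (connect1 _) (IHp _ yp _); last by rewrite /= yA.
by rewrite /adj_in xA yA /und xy.
Qed.

Lemma path_reaches_last x p z : path E x p -> z \in x :: p -> connect E z (last x p).
Proof.
elim: p x => [|y p IHp] x /=; first by rewrite inE => _ /eqP ->.
case/andP=> xy yp; rewrite inE => /predU1P [->|]; last exact: IHp.
exact: connect_trans (connect1 xy) (path_connect yp (mem_last y p)).
Qed.

Lemma connect_adj_in_between (A : {set V}) y c : connect E y c ->
  (forall z, connect E y z -> connect E z c -> z \in A) -> connect (adj_in A) y c.
Proof.
case/connectP => p yp -> between; apply: path_adj_in => //; apply/allP => z zp.
exact: between (path_connect yp zp) (path_reaches_last yp zp).
Qed.

Lemma connect_first_arc a b : connect E a b -> a != b -> exists2 z, E a z & connect E z b.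
Proof.
case/connectP => [[|z p] /= ab ->]; first by rewrite eqxx.
by case/andP: ab => az zp _; exists z => //; apply/connectP; exists p.
Qed.

Lemma connect_last_arc a b : connect E a b -> a != b -> exists2 z, connect E a z & E z b.
Proof.
case/connectP => p + ->; elim/last_ind: p => [|p y _] /=; first by rewrite eqxx.
rewrite rcons_path last_rcons => /andP [ap lastp] _.
by exists (last a p) => //; apply/connectP; exists p.
Qed.

Lemma outdeg0_no_arc x y : outdeg E x = 0 -> E x y = false.
Proof. by move/card0_eq/(_ y); rewrite inE. Qed.

Lemma outdeg0_sink x y : outdeg E x = 0 -> connect E x y -> y = x.
Proof.
move=> x0 xy; apply/eqP/negPn/negP; rewrite eq_sym => /(connect_first_arc xy) [z].
by rewrite outdeg0_no_arc.
Qed.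

(* The ancestors of [y], counted to find extremal vertices in a DAG. *)
Definition ancestors (y : V) : {set V} := [set z | connect E z y].

Lemma biconnected_in_block B : biconnected E B -> exists2 B0, is_block E B0 & B \subset B0.
Proof.
move: {2}#|~: B| (leqnn #|~: B|) => n; elim: n B => [|n IHn] B sizeB bicB.
  move: sizeB; rewrite leqn0 => /eqP/card0_eq coB.
  exists B => //; split=> // B' BB' _; apply/setP => x.
  apply/idP/idP => [_|/(subsetP BB') //]; apply/idPn => xB.
  by move: (coB x); rewrite !inE xB.
have [blockB|notblock] := classic (is_block E B); first by exists B.
have [B' [BB' bicB' neB]] : exists B' : {set V}, [/\ B \subset B', biconnected E B' & B' <> B].
  apply: NNPP => none; apply: notblock; split=> // B' BB' bicB'.
  by apply: NNPP => neB; apply: none; exists B'.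
have sizeB' : #|~: B'| <= n.
  rewrite -ltnS (leq_trans _ sizeB) // proper_card // properC properEneq BB' andbT.
  by apply/eqP => eqB; apply: neB.
have [B0 blockB0 B'B0] := IHn B' sizeB' bicB'.
by exists B0 => //; apply: subset_trans B'B0.
Qed.

Lemma level1_biconnected : level1 E ->
  forall B, biconnected E B -> #|[set h in B | hybrid E h]| <= 1.
Proof.
move=> lv1 B /biconnected_in_block [B0 /lv1 B0hyb BB0]; apply: leq_trans B0hyb.
by apply/subset_leq_card/subsetP => h; rewrite !inE => /andP [/(subsetP BB0) -> ->].
Qed.

End Digraphs.

Section Acyclic.
Variables (V : finType) (E : rel V).
Hypothesis acyc : acyclic E.

Lemma arc_irrefl a : E a a = false.
Proof. by apply/negP => /acyc; rewrite connect0. Qed.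

Lemma connect_antisym a b : connect E a b -> connect E b a -> a = b.
Proof.
move=> ab ba; apply/eqP/negPn/negP => /(connect_first_arc ab) [z az zb].
by move: (acyc az); rewrite (connect_trans zb ba).
Qed.

Lemma ancestors_proper u y : connect E u y -> u != y -> ancestors E u \proper ancestors E y.
Proof.
move=> uy neq; apply/properP; split.
  by apply/subsetP => z; rewrite !inE => /connect_trans; apply.
exists y; rewrite !inE ?connect0 //; apply/negP => yu.
by rewrite (connect_antisym uy yu) eqxx in neq.
Qed.

Lemma unique_source_reaches r : (forall v, indeg E v = 0 -> v = r) -> forall y, connect E r y.
Proof.
move=> src y.
have [z zy zmin] :=
  arg_minnP (fun z => #|ancestors E z|) (connect0 E y : [pred z | connect E z y] y).
rewrite -(src z) //; apply/eqP; rewrite cards_eq0; apply/set0Pn => -[u]; rewrite inE => uz.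
have uz' : u != z by apply: contraTneq uz => ->; rewrite arc_irrefl.
have := zmin u (connect_trans (connect1 uz) zy).
by rewrite leqNgt proper_card // ancestors_proper // connect1.
Qed.

Lemma reaching_all_unique_source r : (forall y, connect E r y) ->
  indeg E r = 0 /\ forall y, indeg E y = 0 -> y = r.
Proof.
move=> reach; split.
  by apply/eqP; rewrite cards_eq0; apply/set0Pn => -[u]; rewrite inE => /acyc; rewrite reach.
move=> y y0; apply/eqP/negPn/negP; rewrite eq_sym => /(connect_last_arc (reach y)) [z _ zy].
by move/card0_eq/(_ z): y0; rewrite inE zy.
Qed.

Lemma minimal_common_ancestor u v w0 : connect E w0 u -> connect E w0 v ->
  exists w, [/\ connect E w u, connect E w v &
    forall w', connect E w' u -> connect E w' v -> connect E w w' -> w' = w].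
Proof.
move=> w0u w0v.
pose common := [pred w | connect E w u && connect E w v].
have [w /andP [wu wv] wmax] :=
  arg_maxnP (fun w => #|ancestors E w|) (introT andP (conj w0u w0v) : common w0).
exists w; split=> // w' w'u w'v ww'; apply/eqP/negPn/negP; rewrite eq_sym => neq.
have := wmax w'; rewrite /= w'u w'v => /(_ isT).
by rewrite leqNgt proper_card // ancestors_proper.
Qed.

Definition interval (w c : V) : {set V} := [set x | connect E w x && connect E x c].

Section Interval.
Variables w c : V.

Lemma interval_to_top (A : {set V}) y : y \in interval w c ->
  (forall z, connect E y z -> connect E z c -> z \in A) -> connect (adj_in E A) y c.
Proof. by rewrite inE => /andP [_ yc]; apply: connect_adj_in_between. Qed.

Lemma interval_to_bottom (A : {set V}) y : y \in interval w c ->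
  (forall z, connect E w z -> connect E z y -> z \in A) -> connect (adj_in E A) y w.
Proof.
by rewrite inE connect_adj_in_sym => /andP [wy _]; apply: connect_adj_in_between.
Qed.

Lemma interval_minus_to_top x y : y \in interval w c -> ~~ connect E y x ->
  connect (adj_in E (interval w c :\ x)) y c.
Proof.
move=> yI ynx; apply: interval_to_top => // z yz zc; move: yI.
rewrite !inE => /andP [wy _]; rewrite (connect_trans wy yz) zc !andbT.
by apply: contraNneq ynx => <-.
Qed.

Lemma interval_minus_to_bottom x y : y \in interval w c -> ~~ connect E x y ->
  connect (adj_in E (interval w c :\ x)) y w.
Proof.
move=> yI xny; apply: interval_to_bottom => // z wz zy; move: yI.
rewrite !inE => /andP [_ yc]; rewrite wz (connect_trans zy yc) !andbT.
by apply: contraNneq xny => <-.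
Qed.

(* The interval from a minimal common ancestor [w] of the two parents [u] and
   [v] of a vertex [c] is biconnected: it is the union of two internally
   disjoint routes from [w] to [c]. *)
Lemma interval_biconnected u v : E u c -> E v c -> connect E w u -> connect E w v ->
  (forall w', connect E w' u -> connect E w' v -> connect E w w' -> w' = w) ->
  biconnected E (interval w c).
Proof.
move=> uc vc wu wv wmin.
have cI : c \in interval w c by rewrite inE connect0 (connect_trans wu (connect1 uc)).
split.
  apply: (connected_in_hub (h := c)) => y yI; apply: interval_to_top => // z yz zc.
  by move: yI; rewrite !inE zc andbT => /andP [/connect_trans ->].
move=> x xI.
have split_ends y : y \in interval w c :\ x ->
    ~~ connect E y x \/ ~~ connect E x y.
  case/setD1P => yx _; apply/orP; rewrite -negb_and; apply: contra yx.
  by case/andP => yx' xy; rewrite (connect_antisym yx' xy).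
move: xI; rewrite inE => /andP [wx xc].
have [->|xw] := eqVneq x w.
  apply: (connected_in_hub (h := c)) => y /setD1P [yw yI].
  apply: interval_minus_to_top => //; apply: contra yw => yw'.
  by move: yI; rewrite inE => /andP [wy _]; rewrite (connect_antisym yw' wy).
have [->|xc'] := eqVneq x c.
  apply: (connected_in_hub (h := w)) => y /setD1P [yc yI].
  apply: interval_minus_to_bottom => //; apply: contra yc => cy.
  by move: yI; rewrite inE => /andP [_ yc']; rewrite (connect_antisym yc' cy).
(* [w] and [c] stay linked: by minimality of [w], [x] misses [u] or [v]. *)
have wc : connect (adj_in E (interval w c :\ x)) c w.
  have [t [tc wt xnt]] : exists t, [/\ E t c, connect E w t & ~~ connect E x t].
    have [xu|] := boolP (connect E x u); last by exists u.
    have [xv|] := boolP (connect E x v); last by exists v.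
    by rewrite (wmin x xu xv wx) eqxx in xw.
  have tI : t \in interval w c by rewrite inE wt (connect1 tc).
  apply: connect_trans (connect1 _) (interval_minus_to_bottom tI xnt).
  rewrite /adj_in !in_setD1 cI tI eq_sym xc' /und tc orbT !andbT.
  by apply: contraNneq xnt => ->.
apply: (connected_in_hub (h := c)) => y yI.
case: (split_ends y yI) => [/(interval_minus_to_top (setD1P yI).2) //|xny].
rewrite connect_adj_in_sym in wc.
exact: connect_trans (interval_minus_to_bottom (setD1P yI).2 xny) wc.
Qed.
End Interval.

(* In a rooted level-1 DAG, a vertex [v] with a single parent [a] and a single
   child [b] cannot sit between two hybrids: the other parent [u] of [b] and
   [v] have a minimal common ancestor [w], and the interval [w, b] is a
   biconnected set containing both [a] and [b]. *)
Lemma hybrids_not_around_path r a v b : (forall y, connect E r y) ->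
  (forall B, biconnected E B -> #|[set h in B | hybrid E h]| <= 1) ->
  E a v -> E v b -> (forall x, E x v -> x = a) -> (forall y, E v y -> y = b) ->
  hybrid E a -> hybrid E b -> False.
Proof.
move=> reach lv1 av vb parent child ha hb.
have [u ub vu'] : exists2 u, E u b & v != u.
  have : 0 < #|[set x | E x b] :\ v|.
    by move: hb; rewrite /hybrid /indeg (cardsD1 v) inE vb add1n => /eqP [->].
  by case/card_gt0P => u; rewrite !inE => /andP [uv ub]; exists u; rewrite // eq_sym.
have [w [wu wv wmin]] := minimal_common_ancestor (reach u) (reach v).
have wnv : w != v.
  apply: contraTneq wu => -> {wmin}; apply/negP => vu.
  have [z /child -> bu] := connect_first_arc vu vu'.
  by move: (acyc ub); rewrite bu.
have wa : connect E w a by have [z wz /parent <-] := connect_last_arc wv wnv.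
have ab : connect E a b := connect_trans (connect1 av) (connect1 vb).
have := lv1 _ (interval_biconnected ub vb wu wv wmin).
apply/negP; rewrite -ltnNge; apply/card_gt1P; exists a, b.
rewrite !inE ha hb wa ab connect0 (connect_trans wa ab) !andbT; split=> //.
by apply: contraTneq av => ->; apply/negP => /acyc; rewrite connect1.
Qed.
End Acyclic.

Section Suppression.
Variables (V : finType) (E : rel V) (v : V).
Local Notation V' := {x : V | x != v}.

Definition suppressed : rel V' :=
  fun x y => E (val x) (val y) || (E (val x) v && E v (val y)).
Local Notation E' := suppressed.

Hypothesis acyc : acyclic E.
Hypothesis child_uniq : forall y y', E v y -> E v y' -> y = y'.
Hypothesis parent_uniq : forall y x x', E v y -> E x v -> E x' v -> x = x'.

Lemma suppressed_connect x y : connect E' x y = connect E (val x) (val y).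
Proof.
apply/idP/idP.
  case/connectP => p + ->; elim: p x => [|z p IHp] x /=; first by rewrite connect0.
  case/andP => /orP [xz|/andP [xv vz]] /IHp; apply: connect_trans; first exact: connect1.
  exact: connect_trans (connect1 xv) (connect1 vz).
(* An [E]-walk from [a] is followed in [E'] from any [s] standing for [a]:
   [s = a], or [a = v] and [s] is a parent of [v]. *)
suff walk a p : path E a p -> last a p = val y ->
    forall s, val s = a \/ (a = v /\ E (val s) v) -> connect E' s y.
  by case/connectP => p xp yl; apply: (walk _ p xp (esym yl)); left.
clear x; elim: p a => [|z p IHp] a /=.
  move=> _ ay s [sa|[av _]]; first by rewrite (val_inj (etrans sa ay)) connect0.
  by move: (valP y); rewrite /= -ay av eqxx.
case/andP=> az zp zl s sa; have [zv|zv] := eqVneq z v.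
  rewrite zv in zp zl; apply: (IHp v zp zl); right; split=> //.
  case: sa => [sa|[av _]]; first by rewrite zv -sa in az.
  by rewrite av zv arc_irrefl in az.
have sz : E' s (exist _ z zv).
  case: sa => [sa|[av sv]]; rewrite /suppressed /= ?sa ?az //.
  by rewrite av in az; rewrite sv az orbT.
by apply: connect_trans (connect1 sz) (IHp _ zp zl _ _); left.
Qed.

Lemma suppressed_acyclic : acyclic E'.
Proof.
move=> x y /orP [xy|/andP [xv vy]]; rewrite suppressed_connect; first exact: acyc.
by apply: contraNN (acyc xv) => /(connect_trans (connect1 vy)).
Qed.

(* Parents of [y] in [E'] are its old parents, or the parent of [v] replacing [v]. *)
Lemma suppressed_indeg y : indeg E' y <= indeg E (val y).
Proof.
rewrite /indeg -(card_imset _ val_inj).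
have [vy|nvy] := boolP (E v (val y)); last first.
  apply/subset_leq_card/subsetP => _ /imsetP [x + ->]; rewrite !inE /suppressed.
  by rewrite (negbTE nvy) andbF orbF.
have sub : val @: [set x | E' x y] \subset ([set u | E u (val y)] :\ v) :|: [set u | E u v].
  apply/subsetP => _ /imsetP [x + ->]; rewrite !inE (valP x) /suppressed.
  by case/orP => [->|/andP [-> _]]; rewrite ?orbT.
apply: leq_trans (subset_leq_card sub) _; rewrite cardsU.
apply: leq_trans (leq_subr _ _) _.
rewrite (cardsD1 v [set u | E u (val y)]) inE vy addnC leq_add2r.
by apply/card_le1_eqP => a b; rewrite !inE => av bv; apply: parent_uniq vy bv av.
Qed.

Lemma suppressed_hybrid : (forall u, indeg E u <= 2) -> forall y, hybrid E' y -> hybrid E (val y).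
Proof.
by move=> deg2 y /eqP y2; rewrite /hybrid eqn_leq deg2 -y2 suppressed_indeg.
Qed.

(* If [v] was the root, its unique child becomes the root. *)
Lemma suppressed_rooted (x0 : V') :
  (exists r, forall y, connect E r y) -> exists r : V', forall y, connect E' r y.
Proof.
case=> r reach; have [rv|rv] := eqVneq r v; last first.
  by exists (exist _ r rv) => y; rewrite suppressed_connect.
have not_v (y : V') : r != val y by rewrite rv eq_sym (valP y).
have [c vc _] := connect_first_arc (reach (val x0)) (not_v x0).
rewrite rv in vc.
have cv : c != v by apply: contraTneq vc => ->; rewrite arc_irrefl.
exists (exist _ c cv) => y; rewrite suppressed_connect /=.
have [c' vc' c'y] := connect_first_arc (reach (val y)) (not_v y).
by rewrite rv in vc'; rewrite (child_uniq vc vc').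
Qed.

(* A common descendant pair of [v] is already below the unique child of [v],
   so [v] is never a lowest common ancestor of remaining vertices. *)
Lemma child_common_ancestor (x y : V') : connect E v (val x) -> connect E v (val y) ->
  exists2 c, E v c & connect E c (val x) && connect E c (val y).
Proof.
move=> vx vy; have nv (z : V') : v != val z by rewrite eq_sym (valP z).
have [c vc cx] := connect_first_arc vx (nv x).
have [c' vc' c'y] := connect_first_arc vy (nv y).
by exists c; rewrite // cx (child_uniq vc vc') c'y.
Qed.

Lemma v_not_lca (x y : V') : ~ is_lca E (val x) (val y) v.
Proof.
case=> /andP [vx vy] vmin; have [c vc cxy] := child_common_ancestor vx vy.
by move: (vc); rewrite {1}(vmin c cxy (connect1 vc)) arc_irrefl.
Qed.

Lemma suppressed_lca x y w : is_lca E' x y w <-> is_lca E (val x) (val y) (val w).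
Proof.
rewrite /is_lca /common_ancestor /ancestor !suppressed_connect.
split=> -[wxy wmin]; split=> // w'; last first.
  by rewrite !suppressed_connect => w'xy ww'; apply: val_inj; apply: wmin.
have [->|w'v] := eqVneq w' v.
  case/andP=> vx vy wv; have [c vc cxy] := child_common_ancestor vx vy.
  have cv : c != v by apply: contraTneq vc => ->; rewrite arc_irrefl.
  have := wmin (exist _ c cv); rewrite !suppressed_connect => /(_ cxy).
  move=> /(_ (connect_trans wv (connect1 vc))) cw.
  by move: (acyc vc); rewrite -cw /= in wv; rewrite wv.
move=> w'xy ww'; have := wmin (exist _ w' w'v).
by rewrite !suppressed_connect => /(_ w'xy ww') <-.
Qed.

(* Level-1 is preserved: this needs the whole graph to be rooted with
   indegree at most 2. *)
Hypothesis rooted : exists r, forall y, connect E r y.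
Hypothesis indeg2 : forall u, indeg E u <= 2.
Hypothesis lv1 : forall B, biconnected E B -> #|[set h in B | hybrid E h]| <= 1.

Lemma lift_connect (A : {set V'}) (W : {set V}) : (forall a, a \in A -> val a \in W) ->
  (forall a b, a \in A -> b \in A -> E' a b -> connect (adj_in E W) (val a) (val b)) ->
  forall x y, connect (adj_in E' A) x y -> connect (adj_in E W) (val x) (val y).
Proof.
move=> AW lift x y /connectP [p + ->]; elim: p x => [|z p IHp] x /=; first by rewrite connect0.
case/andP => /and3P [xA zA /orP xz] /IHp; apply: connect_trans.
by case: xz => [/lift|/lift]; rewrite // connect_adj_in_sym; apply.
Qed.

Lemma lift_connect_via_v (A : {set V'}) (W : {set V}) : v \in W ->
  (forall a, a \in A -> val a \in W) ->
  forall x y, connect (adj_in E' A) x y -> connect (adj_in E W) (val x) (val y).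
Proof.
move=> vW AW; apply: lift_connect => // a b aA bA /orP [ab|/andP [av vb]].
  by apply: connect1; rewrite /adj_in !AW // /und ab.
apply: (@connect_trans _ _ v); apply: connect1.
  by rewrite /adj_in AW // vW /und av.
by rewrite /adj_in AW // vW /und vb.
Qed.

Definition direct_on (A : {set V'}) : Prop :=
  forall a b, a \in A -> b \in A -> E' a b -> E (val a) (val b).

Lemma lift_connect_direct (A : {set V'}) (W : {set V}) : direct_on A ->
  (forall a, a \in A -> val a \in W) ->
  forall x y, connect (adj_in E' A) x y -> connect (adj_in E W) (val x) (val y).
Proof.
move=> dA AW; apply: lift_connect => // a b aA bA ab.
by apply: connect1; rewrite /adj_in !AW // /und (dA a b).
Qed.

Lemma hybrid_count_lift (B : {set V'}) (W : {set V}) : (forall a, a \in B -> val a \in W) ->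
  #|[set h in B | hybrid E' h]| <= #|[set h in W | hybrid E h]|.
Proof.
move=> BW; rewrite -(card_imset _ val_inj).
apply/subset_leq_card/subsetP => _ /imsetP [x + ->].
by rewrite !inE => /andP [xB /(suppressed_hybrid indeg2)]; rewrite BW.
Qed.

Lemma direct_biconnected (B : {set V'}) : biconnected E' B -> direct_on B ->
  biconnected E (val @: B).
Proof.
move=> [conB remB] dB; split.
  move=> _ _ /imsetP [x xB ->] /imsetP [y yB ->].
  by apply: (lift_connect_direct dB) (conB x y xB yB) => a; apply: imset_f.
move=> _ /imsetP [x0 x0B ->] x1 y1.
move=> /setD1P [xx0 /imsetP [x xB Ex]] /setD1P [yx0 /imsetP [y yB Ey]].
subst x1 y1; rewrite (inj_eq val_inj) in xx0 yx0.
have sub a : a \in B :\ x0 -> val a \in val @: B :\ val x0.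
  by case/setD1P => ax0 aB; rewrite !inE imset_f // (inj_eq val_inj) ax0.
have dBx0 : direct_on (B :\ x0).
  by move=> a b /setD1P [_ aB] /setD1P [_ bB]; apply: dB.
by apply: (lift_connect_direct dBx0 sub); apply: remB; rewrite // !inE ?xB ?yB ?xx0 ?yx0.
Qed.

Lemma direct_or_bypass (A : {set V'}) :
  direct_on A \/ exists a b, [/\ a \in A, b \in A, E (val a) v & E v (val b)].
Proof.
have [|none] := classic (exists a b, [/\ a \in A, b \in A, E (val a) v & E v (val b)]).
  by right.
left=> a b aA bA /orP [//|/andP [av vb]]; case: none; by exists a, b.
Qed.

Section Bypass.
Variables (B : {set V'}) (a b : V').
Hypotheses (bicB : biconnected E' B) (aB : a \in B) (bB : b \in B) (big : 2 < #|B|).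
Hypotheses (av : E (val a) v) (vb : E v (val b)).

Let W := v |: val @: B.

Lemma bypass_arc x y : E' x y -> E (val x) (val y) \/ (x = a /\ y = b).
Proof.
case/orP => [|/andP [xv vy]]; first by left.
by right; split; apply: val_inj; [apply: parent_uniq vb xv av | apply: child_uniq vy vb].
Qed.

Lemma direct_off_b : direct_on (B :\ b).
Proof.
move=> x y _ /setD1P [yb _] /bypass_arc [//|[_ eyb]].
by rewrite eyb eqxx in yb.
Qed.

Lemma direct_off_a : direct_on (B :\ a).
Proof.
move=> x y /setD1P [xa _] _ /bypass_arc [//|[exa _]].
by rewrite exa eqxx in xa.
Qed.

Lemma mem_bypass_set (y : V') : (val y \in W) = (y \in B).
Proof. by rewrite !inE (negbTE (valP y)) mem_imset //; apply: val_inj. Qed.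

Lemma bypass_set_cases x : x \in W -> x = v \/ exists2 y, y \in B & x = val y.
Proof. by case/setU1P => [->|/imsetP [y yB ->]]; [left | right; exists y]. Qed.

Lemma bypass_ends_differ : a != b.
Proof. by apply: contraTneq av => ->; apply/negP => /acyc; rewrite connect1. Qed.

Lemma bypass_connected : connected_in E W.
Proof.
have inW y : y \in B -> val y \in W by rewrite mem_bypass_set.
have vW : v \in W by apply: setU11.
apply: (connected_in_hub (h := val a)) => _ /bypass_set_cases [->|[y yB ->]].
  by apply: connect1; rewrite /adj_in vW inW // /und av orbT.
exact: (lift_connect_via_v vW inW) (bicB.1 y a yB aB).
Qed.

(* Without [v], every vertex is linked to a third vertex [z] of [B] avoiding
   [a] or [b], which removes the need for the bypass arc. *)
Lemma bypass_minus_v : connected_in E (W :\ v).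
Proof.
have [z zab] : exists z, z \in B :\ a :\ b.
  apply/card_gt0P; move: big; rewrite (cardsD1 a B) aB (cardsD1 b (B :\ a)).
  by case: (b \in B :\ a); rewrite /= ?add0n ?add1n !ltnS // => /ltnW.
have inW y : y \in B -> val y \in W :\ v by rewrite in_setD1 mem_bypass_set (valP y) => ->.
have ab := bypass_ends_differ.
move: zab; rewrite !in_setD1 => /and3P [zb za zB].
apply: (connected_in_hub (h := val z)) => x /setD1P [xv /bypass_set_cases [exv|[y yB exy]]].
  by rewrite exv eqxx in xv.
subst x; have [->|ya] := eqVneq y a.
  apply: (lift_connect_direct direct_off_b) (bicB.2 b bB a z _ _).
    by move=> x /setD1P [_ /inW].
  by rewrite in_setD1 ab aB.
  by rewrite in_setD1 zb zB.
apply: (lift_connect_direct direct_off_a) (bicB.2 a aB y z _ _).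
  by move=> x /setD1P [_ /inW].
by rewrite in_setD1 ya yB.
by rewrite in_setD1 za zB.
Qed.

(* Without a vertex [x0] of [B], the path through [v] links everything to
   whichever of [a], [b] survives. *)
Lemma bypass_minus_vertex x0 : x0 \in B -> connected_in E (W :\ val x0).
Proof.
move=> x0B; have ab := bypass_ends_differ.
have inW y : y \in B :\ x0 -> val y \in W :\ val x0.
  by rewrite !in_setD1 (inj_eq val_inj) mem_bypass_set.
have vW : v \in W :\ val x0 by rewrite in_setD1 setU11 andbT eq_sym (valP x0).
pose h := if x0 == a then b else a.
have hB : h \in B :\ x0.
  by rewrite /h; case: eqVneq => [->|]; rewrite in_setD1 ?bB ?aB // eq_sym andbT.
have vh : und E v (val h) by rewrite /h /und; case: eqVneq; rewrite ?vb ?av ?orbT.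
apply: (connected_in_hub (h := val h)) => x /setD1P [xx0 /bypass_set_cases [->|[y yB exy]]].
  by apply: connect1; rewrite /adj_in vW inW.
subst x; rewrite (inj_eq val_inj) in xx0.
by apply: (lift_connect_via_v vW inW) (bicB.2 x0 x0B y h _ hB); rewrite in_setD1 xx0.
Qed.

Lemma bypass_biconnected : biconnected E W.
Proof.
split; first exact: bypass_connected.
move=> _ /bypass_set_cases [->|[x0 x0B ->]]; first exact: bypass_minus_v.
exact: bypass_minus_vertex.
Qed.
End Bypass.

(* Biconnected sets of [E'] lift to biconnected sets of [E] with at least as
   many hybrids, except when [B] is the pair of ends of a bypass, which
   [hybrids_not_around_path] handles. *)
Lemma suppressed_level1 (B : {set V'}) :
  biconnected E' B -> #|[set h in B | hybrid E' h]| <= 1.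
Proof.
move=> bicB; case: (direct_or_bypass B) => [direct|[a [b [aB bB av vb]]]].
  apply: leq_trans (lv1 (direct_biconnected bicB direct)).
  by apply: hybrid_count_lift => a aB; apply: imset_f.
have [big|small] := ltnP 2 #|B|.
  apply: leq_trans (lv1 (bypass_biconnected bicB aB bB big av vb)).
  by apply: hybrid_count_lift => y yB; rewrite mem_bypass_set.
(* With at most two vertices, [a] and [b] would both be hybrids. *)
have other_nonhybrid x : x \in B -> ~~ hybrid E' x -> #|[set h in B | hybrid E' h]| <= 1.
  move=> xB xnh; apply: leq_trans (_ : #|B :\ x| <= 1); last first.
    by move: small; rewrite (cardsD1 x) xB.
  apply/subset_leq_card/subsetP => h; rewrite !inE => /andP [hB hh]; rewrite hB andbT.
  by apply: contraNneq xnh => <-.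
have [ha|] := boolP (hybrid E' a); last exact: other_nonhybrid.
have [hb|] := boolP (hybrid E' b); last exact: other_nonhybrid.
have [r reach] := rooted.
case: (hybrids_not_around_path acyc reach lv1 av vb).
- by move=> x xv; apply: parent_uniq vb xv av.
- by move=> y vy; apply: child_uniq vy vb.
- exact: suppressed_hybrid.
- exact: suppressed_hybrid.
Qed.
End Suppression.

Arguments suppressed {V} E v.

(* It is a labelled level-1 network explaining
   [e], up to superfluous vertices and labels. *)
Record pre_network (Ts : finType) (e : rel Ts) (V : finType) (E : rel V)
    (psi : Ts -> V) (t : V -> label) : Prop := PreNetwork {
  pre_acyclic : acyclic E;
  pre_rooted : exists r, forall y, connect E r y;
  pre_indeg : forall u, indeg E u <= 2;
  pre_level1 : forall B, biconnected E B -> #|[set h in B | hybrid E h]| <= 1;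
  pre_inj : injective psi;
  pre_leaf : forall a, outdeg E (psi a) = 0 /\ indeg E (psi a) <= 1;
  pre_explains : forall a b,
    e a b <-> a != b /\ exists w, is_lca E (psi a) (psi b) w /\ t w = L1
}.

Lemma network_pre_network (T : finType) (e : rel T) (V : finType) (E : rel V)
    (X : {set V}) (t : V -> label) (phi : T -> V) :
  is_network E X -> level1 E -> injective phi -> (forall x, x \in X <-> exists a, phi a = x) ->
  (forall a b, e a b <-> a != b /\ exists w, is_lca E (phi a) (phi b) w /\ t w = L1) ->
  pre_network e E phi t.
Proof.
move=> [acyc net] lv1 inj leaves explains.
have phiX a : phi a \in X by apply/leaves; exists a.
case: net => [[one _]|[[r [_ _ src]] [leafX inner]]].
  have le1 (A : {set V}) : #|A| <= 1 by rewrite -one max_card.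
  have [r _] : exists r : V, r \in [set: V] by apply/card_gt0P; rewrite cardsT one.
  have single (x y : V) : x = y.
    by move/card_le1_eqP: (le1 [set: V]) => /(_ y x); rewrite !inE; apply.
  split=> // [|u|a]; first by exists r => y; rewrite (single r y) connect0.
    exact: leq_trans (le1 _) _.
  split; last exact: le1.
  apply/eqP; rewrite cards_eq0; apply/eqP/setP => y.
  by rewrite !inE (single (phi a) y) arc_irrefl.
split=> //; first by exists r; exact: unique_source_reaches.
- move=> u; have [->//|u0] := eqVneq (indeg E u) 0.
  have [/leafX [_ ->] //|uX] := boolP (u \in X).
  by case: (inner u u0 uX) => -[-> _].
- exact: level1_biconnected.
- by move=> a; case/leafX: (phiX a) => -> ->.
Qed.

Lemma pre_network_induced (T : finType) (e : rel T) (S : {set T}) (V : finType)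
    (E : rel V) (psi : T -> V) (t : V -> label) :
  pre_network e E psi t -> pre_network (induced e S) E (fun a => psi (val a)) t.
Proof.
case=> acyc rooted indeg2 lv1 inj leaf explains; split=> //.
- by move=> a b /inj /val_inj.
- by move=> a b; rewrite -(inj_eq val_inj); apply: explains.
Qed.

(* Vertices that a network cannot have outside its leaf set. *)
Definition suppressible (V : finType) (E : rel V) (v : V) : Prop :=
  outdeg E v = 0 \/ (outdeg E v = 1 /\ indeg E v <= 1).

Lemma suppressible_child (V : finType) (E : rel V) v : suppressible E v ->
  forall y y', E v y -> E v y' -> y = y'.
Proof.
case=> [v0 y y'|[v1 _] y y' vy vy']; first by rewrite outdeg0_no_arc.
by move/card_le1_eqP: (eq_leq v1) => /(_ y' y); rewrite !inE; apply.
Qed.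

Lemma suppressible_parent (V : finType) (E : rel V) v : suppressible E v ->
  forall y x x', E v y -> E x v -> E x' v -> x = x'.
Proof.
case=> [v0 y|[_ v1] y x x' _ xv x'v]; first by rewrite outdeg0_no_arc.
by move/card_le1_eqP: v1 => /(_ x' x); rewrite !inE; apply.
Qed.

Lemma pre_network_suppress (Ts : finType) (e : rel Ts) (a0 : Ts) (V : finType) (E : rel V)
    (psi : Ts -> V) (t : V -> label) (v : V) (psi_v : forall a, psi a != v) :
  suppressible E v -> pre_network e E psi t ->
  pre_network e (suppressed E v) (fun a => exist _ (psi a) (psi_v a)) (fun w => t (val w)).
Proof.
move=> supp [acyc rooted indeg2 lv1 inj leaf explains].
have child := suppressible_child supp; have parent := suppressible_parent supp.
split.
- exact: suppressed_acyclic.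
- exact: (suppressed_rooted acyc child (exist _ (psi a0) (psi_v a0))).
- by move=> u; apply: leq_trans (suppressed_indeg parent u) (indeg2 _).
- exact: suppressed_level1.
- by move=> a b [/inj].
- move=> a; have [out0 in1] := leaf a.
  split; last exact: leq_trans (suppressed_indeg parent _) in1.
  apply/eqP; rewrite cards_eq0; apply/eqP/setP => y.
  by rewrite !inE /suppressed /= !(outdeg0_no_arc _ out0).
- move=> a b; rewrite explains; split=> -[ab [w [lca_w tw]]]; split=> //.
    have wv : w != v.
      apply: contraPneq lca_w => ->.
      exact: (v_not_lca acyc child
        (x := exist _ (psi a) (psi_v a)) (y := exist _ (psi b) (psi_v b))).
    by exists (exist _ w wv); split=> //; apply: (suppressed_lca acyc child _ _ _).2.
  by exists (val w); split=> //; exact: (suppressed_lca acyc child _ _ _).1 lca_w.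
Qed.

(* Make the labelling of a pre-network that of a labelled network: [Lodot]
   exactly on the leaves [X]. Inner vertices only matter through [L1]. *)
Definition leaf_labelling (V : finType) (X : {set V}) (t : V -> label) (w : V) : label :=
  if w \in X then Lodot else if t w is Lodot then L0 else t w.

Section MinimalPreNetwork.
Variables (Ts : finType) (e : rel Ts) (a0 : Ts) (V : finType) (E : rel V).
Variables (psi : Ts -> V) (t : V -> label).
Hypothesis pre : pre_network e E psi t.
Hypothesis minimal : forall v, (forall a, psi a != v) -> ~ suppressible E v.

Let X := [set psi a | a in Ts].

Lemma mem_leaves x : x \in X <-> exists a, psi a = x.
Proof. by split=> [/imsetP [a _ ->]|[a <-]]; [exists a | apply: imset_f]. Qed.

Lemma leaf_sink a y : connect E (psi a) y -> y = psi a.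
Proof. exact: outdeg0_sink (pre_leaf pre a).1. Qed.

Lemma lca_not_leaf a b w : a != b -> is_lca E (psi a) (psi b) w -> w \notin X.
Proof.
move=> ab [/andP [wa wb] _]; apply/negP => /mem_leaves [c ew]; subst w.
by move: ab; rewrite (pre_inj pre (leaf_sink wa)) (pre_inj pre (leaf_sink wb)) eqxx.
Qed.

Lemma nonleaf_degrees v : v \notin X ->
  0 < outdeg E v /\ (indeg E v <= 1 -> 1 < outdeg E v).
Proof.
move=> vX; have /minimal : forall a, psi a != v.
  by move=> a; apply: contraNneq vX => <-; apply/mem_leaves; exists a.
rewrite /suppressible; case: (outdeg E v) => [|[|n]] ns //.
  by case: ns; left.
by split=> // v1; case: ns; right.
Qed.

(* With two vertices or more, the root is not a leaf: leaves reach only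
   themselves. *)
Lemma leaf_not_root r a : (forall y, connect E r y) -> 1 < #|V| -> psi a != r.
Proof.
move=> reach; apply: contraTneq => ra; rewrite -leqNgt; apply/card_le1_eqP => x y _ _.
by move: (reach x) (reach y); rewrite -ra => /leaf_sink -> /leaf_sink ->.
Qed.

Lemma minimal_is_network : is_network E X.
Proof.
have [acyc [r reach] indeg2 _ _ leaf _] := pre.
have [r0 src] := reaching_all_unique_source acyc reach.
split=> //; have [small|big] := leqP #|V| 1.
  left; split.
    by apply/eqP; rewrite eqn_leq small; apply/card_gt0P; exists (psi a0).
  apply/setP => x; rewrite inE; apply/mem_leaves; exists a0.
  by move/card_le1_eqP: small => /(_ x (psi a0)); apply.
have leaf_not_r a := leaf_not_root a reach big.
right; split; [exists r; split=> // | split].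
- have rX : r \notin X.
    by apply/negP => /mem_leaves [a ar]; move: (leaf_not_r a); rewrite ar eqxx.
  by have [_ r_out] := nonleaf_degrees rX; apply: r_out; rewrite r0.
- move=> x; split=> [/mem_leaves [a <-]|[x0 x1]].
    have [-> a1] := leaf a; split=> //; apply/eqP; rewrite eqn_leq a1 lt0n.
    by apply: contra (leaf_not_r a) => /eqP /src ->.
  by apply/negPn/negP => /nonleaf_degrees []; rewrite x0.
- move=> u u0 uX; have [u_out0 u_out1] := nonleaf_degrees uX.
  move: (indeg2 u) u0 u_out1; case: (indeg E u) => [|[|[|n]]] //= _ _ u_out.
    by left; split=> //; apply: u_out.
  by right.
Qed.

Lemma minimal_explains : explainable_level1 e.
Proof.
have [_ _ _ lv1 inj _ explains] := pre.
exists V, E, X, (leaf_labelling X t), psi; split.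
- exact: minimal_is_network.
- by move=> B [bicB _]; exact: lv1.
- move=> w; rewrite /leaf_labelling; case: (w \in X) => //; by case: (t w).
- by split=> // x; apply: mem_leaves.
- move=> a b; rewrite explains; split=> -[ab [w [lca_w tw]]]; split=> //; exists w; split=> //.
    by rewrite /leaf_labelling (negbTE (lca_not_leaf ab lca_w)) tw.
  by move: tw; rewrite /leaf_labelling (negbTE (lca_not_leaf ab lca_w)); case: (t w).
Qed.
End MinimalPreNetwork.

Lemma pre_network_explainable (Ts : finType) (e : rel Ts) (a0 : Ts) (V : finType)
    (E : rel V) (psi : Ts -> V) (t : V -> label) :
  pre_network e E psi t -> explainable_level1 e.
Proof.
move: {2}#|V| (leqnn #|V|) => n; elim: n V E psi t => [|n IHn] V E psi t sizeV pre.
  by move: sizeV; rewrite leqn0 => /eqP/card0_eq/(_ (psi a0)).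
have [[v [psi_v supp]]|none] := classic (exists v, (forall a, psi a != v) /\ suppressible E v).
  apply: IHn (pre_network_suppress a0 psi_v supp pre).
  by rewrite card_sig cardC1; move: sizeV; case: #|V|.
apply: (minimal_explains a0 pre) => v psi_v supp; apply: none; by exists v.
Qed.

Lemma explainable_iso (T T' : finType) (e : rel T) (e' : rel T') (f : T -> T') :
  bijective f -> (forall a b, e a b = e' (f a) (f b)) ->
  explainable_level1 e' -> explainable_level1 e.
Proof.
case=> g fK gK ee' [V [E [X [t [phi [net lv1 tX [inj leaves] explains]]]]]].
exists V, E, X, t, (phi \o f); split=> //.
  split=> [|x]; first exact: inj_comp inj (can_inj fK).
  by rewrite leaves; split=> -[a <-]; [exists (g a) | exists (f a)]; rewrite /= ?gK.
by move=> a b; rewrite ee' explains (inj_eq (can_inj fK)).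
Qed.

Theorem mainTheorem17 (T : finType) (e : rel T) :
  symmetric e -> irreflexive e -> 0 < #|T| ->
  (explainable_level1 e <->
   forall S : {set T}, S != set0 -> explainable_level1 (induced e S)).
Proof.
move=> _ _ T_gt0; split.
  case=> V [E [X [t [phi [net lv1 _ [inj leaves] explains]]]]] S /set0Pn [a0 a0S].
  apply: (pre_network_explainable (exist _ a0 a0S)).
  exact: pre_network_induced (network_pre_network net lv1 inj leaves explains).
move=> hereditary; have setT_gt0 : [set: T] != set0 by rewrite -card_gt0 cardsT.
apply: (explainable_iso (f := fun a => exist _ a (in_setT a))) (hereditary _ setT_gt0) => //.
by exists val => // -[a aT]; apply: val_inj.
Qed.
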